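(* Let $w\in S_n$ and $v\in S_n$ with $v\le w$. Then the restriction $[\Omega_v]_{X_w}:=\iota([\Omega_v])$ is the unique Knutson–Tao class for $v$ in $H^*_T(X_w)$.
   Context: Let $G=GL_n(\mathbb{C})$, $B$ (resp. $B^-$) the invertible upper- (resp. lower-) triangular matrices, and $T$ the diagonal torus. Permutations are identified with permutation matrices via $we_i=e_{w(i)}$, and $s_{jk}$ is the transposition of $j,k$. $X_w=\overline{BwB/B}$, the Bruhat order is $v\le w$ iff $[v]\in X_w$, $\mathrm{Inv}(w)=\{t_i-t_j:i<j,\ w^{-1}(i)>w^{-1}(j)\}$, and $\ell(w)=|\mathrm{Inv}(w)|$. In GKM form, $H^*_T(X_w)$ is the ring of tuples $(p_u)_{u\le w}$, $p_u\in\mathbb{C}[t_1,\ldots,t_n]$, with $p_u-p_{s_{jk}u}\in\langle t_j-t_k\rangle$ whenever $j<k$ and $u,s_{jk}u\le w$; $H^*_T(G/B)$ is the case $w=w_0$. Restriction $\iota:H^*_T(G/B)\to H^*_T(X_w)$ is $\iota((p_u)_{u\in S_n})=(p_u)_{u\le w}$. The Schubert class $[\Omega_v]\in H^*_T(G/B)$ is the equivariant class of $\overline{B^-vB/B}$; writing $[\Omega_v]=(p^v_u)_u$, one has $p^v_u=0$ unless $u\ge v$, each nonzero $p^v_u$ homogeneous of degree $\ell(v)$, and $p^v_v=\prod_{\beta\in\mathrm{Inv}(v)}\beta$. The moment graph of $X_w$ has vertices $\{u\le w\}$ and an edge between $u$ and $s_{jk}u$ (both $\le w$), directed from the Bruhat-larger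 to the Bruhat-smaller endpoint and labeled $t_j-t_k$. The edges out of $u$ are labeled exactly by $\mathrm{Inv}(u)$. A Knutson–Tao class for $v$ in $H^*_T(X_w)$ is $(q_u)_{u\le w}\in H^*_T(X_w)$ with: $q_v$ equal to the product of the labels of the edges out of $v$; every nonzero $q_u$ homogeneous of degree $\deg q_v$; and $q_u=0$ whenever there is no directed path of positive length from $u$ to $v$. *)

From HB Require Import structures.
From mathcomp Require Import all_boot all_order all_algebra all_fingroup.
From mathcomp Require Import mpoly.
Set Implicit Arguments. Unset Strict Implicit. Unset Printing Implicit Defensive.
Import GRing.Theory.
Local Open Scope ring_scope.

Section SchubertDefs.
Variable n : nat.
Variable F : numClosedFieldType.

(* S_n acting on indices 'I_n = {0,...,n-1} (playing the role of {1,...,n}). *)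
Notation perm_n := {perm 'I_n}.

(* s_{jk} u := s_{jk} o u (product of permutation matrices = composition).
   In mathcomp, (u * s) x = s (u x), so s_{jk} o u = u * tperm j k. *)
Definition sref (j k : 'I_n) (u : perm_n) : perm_n := (u * tperm j k)%g.

Definition inv_pair (w : perm_n) (p : 'I_n * 'I_n) : bool :=
  (p.1 < p.2)%N && (w^-1%g p.2 < w^-1%g p.1)%N.

Definition length (w : perm_n) : nat := #|[pred p | inv_pair w p]|.

(* Bruhat order as the reflexive-transitive closure of  u -> s_{jk} u  with l increasing
   (Bjorner-Brenti, Def. 2.1.1). *)
Definition bruhat_step (u u' : perm_n) : bool :=
  [exists j : 'I_n, exists k : 'I_n,
     [&& (j < k)%N, u' == sref j k u & (length u < length u')%N]].

Definition bruhat_le (v w : perm_n) : bool := connect bruhat_step v w.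

Definition bruhat_lt (v w : perm_n) : bool := (v != w) && bruhat_le v w.

Definition inv_prod (v : perm_n) : {mpoly F[n]} :=
  \prod_(p : 'I_n * 'I_n | inv_pair v p) ('X_p.1 - 'X_p.2).

(* GKM description: a tuple (q_u) indexed by the vertices u with P u (P = {u <= w}),
   represented as a function on all of S_n whose values outside P are irrelevant. *)
Definition GKM_class (P : pred perm_n) (q : perm_n -> {mpoly F[n]}) : Prop :=
  forall (u : perm_n) (j k : 'I_n), (j < k)%N -> P u -> P (sref j k u) ->
    exists r : {mpoly F[n]}, q u - q (sref j k u) = r * ('X_j - 'X_k).

Definition HT_Xw (w : perm_n) := GKM_class (fun u => bruhat_le u w).
Definition HT_GB := GKM_class predT.

Definition mg_edge (w : perm_n) (u u' : perm_n) : bool :=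
  [exists j : 'I_n, exists k : 'I_n,
     [&& (j < k)%N, u' == sref j k u, bruhat_le u w, bruhat_le u' w
       & bruhat_lt u' u]].

Definition mg_pos_path (w u v : perm_n) : bool :=
  [exists u' : perm_n, mg_edge w u u' && connect (mg_edge w) u' v].

Definition out_label_prod (w v : perm_n) : {mpoly F[n]} :=
  \prod_(p : 'I_n * 'I_n | (p.1 < p.2)%N && mg_edge w v (sref p.1 p.2 v))
     ('X_p.1 - 'X_p.2).

(* Total degree of a polynomial (meaningful for nonzero polynomials). *)
Definition tdeg (p : {mpoly F[n]}) : nat := (msize p).-1.

Definition KT_class (w v : perm_n) (q : perm_n -> {mpoly F[n]}) : Prop :=
  [/\ HT_Xw w q,
      q v = out_label_prod w v,
      (forall u, bruhat_le u w -> q u != 0 -> q u \is (tdeg (q v)).-homog) &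
      (forall u, bruhat_le u w -> u != v -> ~~ mg_pos_path w u v -> q u = 0)].

Definition schubert_class_props (v : perm_n) (p : perm_n -> {mpoly F[n]}) : Prop :=
  [/\ HT_GB p,
      (forall u, ~~ bruhat_le v u -> p u = 0),
      (forall u, p u != 0 -> p u \is (length v).-homog) &
      p v = inv_prod v].

End SchubertDefs.

(* A Schubert class restricts to a Knutson-Tao class because the moment-graph
   edges out of v are exactly the inversions of v, and p_u <> 0 forces
   v <= u <= w, which yields a downward path from u to v.
   Two Knutson-Tao classes q, q' for v agree at every u <= w, by induction on
   l(u): only u with a path to v matter, and then l(v) < l(u).  For each
   inversion (j,k) of u the vertex s_jk u is shorter, so q and q' agree there
   and the GKM condition makes t_j - t_k divide q_u - q'_u.  These l(u)
   pairwise non-associate prime linear forms divide a homogeneous polynomial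
   of degree l(v) < l(u), which must therefore vanish. *)

From HB Require Import structures.
From mathcomp Require Import all_boot all_order all_algebra all_fingroup.
From mathcomp Require Import mpoly ring zify.
Set Implicit Arguments. Unset Strict Implicit. Unset Printing Implicit Defensive.
Import GRing.Theory.

Section SubXDivisibility.
Variables (R : idomainType) (n : nat).
Local Open Scope ring_scope.
Implicit Types (f g r : {mpoly R[n]}) (a b : 'I_n).

Definition lt_pair (P : 'I_n * 'I_n) : bool := (P.1 < P.2)%N.

Definition dvdmp (d f : {mpoly R[n]}) : Prop := exists r, f = r * d.

Lemma subX_neq0 (i j : 'I_n) : i != j -> 'X_i - 'X_j != 0 :> {mpoly R[n]}.
Proof.
move=> ij; apply/eqP => /(congr1 (meval (fun l => (l == i)%:R))).
by rewrite mevalB !mevalXU eqxx eq_sym (negbTE ij) subr0 meval0; apply/eqP/oner_neq0.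
Qed.

Definition substX a b : n.-tuple {mpoly R[n]} :=
  [tuple if i == a then 'X_b else 'X_i | i < n].

Lemma comp_substXU a b i : 'X_i \mPo substX a b = if i == a then 'X_b else 'X_i.
Proof. by rewrite comp_mpolyXU -tnth_nth tnth_mktuple. Qed.

Lemma dvdmp_sub_comp_substX a b f : dvdmp ('X_a - 'X_b) (f - (f \mPo substX a b)).
Proof.
pose D f := dvdmp ('X_a - 'X_b) (f - (f \mPo substX a b)).
have DD f1 f2 : D f1 -> D f2 -> D (f1 + f2).
  by move=> [r1 h1] [r2 h2]; exists (r1 + r2); rewrite rmorphD mulrDl -h1 -h2; ring.
have DM f1 f2 : D f1 -> D f2 -> D (f1 * f2).
  move=> [r1 h1] [r2 h2]; set g1 := f1 \mPo _ in h1; exists (r1 * f2 + g1 * r2).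
  have -> : (r1 * f2 + g1 * r2) * ('X_a - 'X_b) =
            r1 * ('X_a - 'X_b) * f2 + g1 * (r2 * ('X_a - 'X_b)) by ring.
  by rewrite rmorphM -h1 -h2; ring.
have DC c : D c%:MP by exists 0; rewrite comp_mpolyC subrr mul0r.
have DX i : D 'X_i.
  rewrite /D comp_substXU; case: eqP => [->|_]; first by exists 1; rewrite mul1r.
  by exists 0; rewrite subrr mul0r.
have D1 : D 1 by move: (DC 1); rewrite mpolyC1.
elim/mpolyind: f => [|c m f _ _ Df]; first by move: (DC 0); rewrite mpolyC0.
apply: (DD) Df; rewrite -mul_mpolyC mpolyXE_id; apply: (DM) => //.
apply: (big_ind D) => [//|f1 f2|i _]; first exact: (DM).
by elim: (m i) => [|k IHk]; rewrite ?expr0 // exprS; apply: DM.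
Qed.

(* Primality of [t_a - t_b], detected by the substitution [t_a := t_b]. *)
Lemma dvdmp_subX_cancel a b r g : g \mPo substX a b != 0 ->
  dvdmp ('X_a - 'X_b) (r * g) -> dvdmp ('X_a - 'X_b) r.
Proof.
move=> nz_g [s /(congr1 (comp_mpoly (substX a b)))].
rewrite !rmorphM rmorphB /= !comp_substXU eqxx if_same subrr mulr0 => /eqP.
rewrite mulf_eq0 (negbTE nz_g) orbF => /eqP r_0.
by have [r' e] := dvdmp_sub_comp_substX a b r; exists r'; rewrite -e r_0 subr0.
Qed.

Lemma comp_substX_subX_neq0 (P Q : 'I_n * 'I_n) :
  lt_pair P -> lt_pair Q -> Q != P ->
  ('X_Q.1 - 'X_Q.2) \mPo substX P.1 P.2 != 0.
Proof.
case: P Q => a b [c d]; rewrite /lt_pair /= => ab cd neq; rewrite rmorphB /= !comp_substXU.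
have ne_cd : c != d by rewrite neq_ltn cd.
case: (eqVneq c a) => [ca|_]; case: (eqVneq d a) => [da|_]; apply: subX_neq0 => //.
- by rewrite ca da eqxx in ne_cd.
- by apply: contraNneq neq => bd; rewrite ca bd.
- by rewrite neq_ltn (ltn_trans _ ab) // -da.
Qed.

Lemma prod_subX_neq0 (s : seq ('I_n * 'I_n)) : all lt_pair s ->
  \prod_(P <- s) ('X_P.1 - 'X_P.2) != 0 :> {mpoly R[n]}.
Proof.
move=> /allP ord_s; rewrite prodf_seq_neq0; apply/allP => P /ord_s ord_P.
by apply: subX_neq0; rewrite neq_ltn [(_ < _)%N]ord_P.
Qed.

Lemma prod_subX_dhomog (s : seq ('I_n * 'I_n)) :
  \prod_(P <- s) ('X_P.1 - 'X_P.2 : {mpoly R[n]}) \is (size s).-homog.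
Proof.
elim: s => [|P s IH]; first by rewrite big_nil dhomog1.
by rewrite big_cons (dhomogM (d := 1)) // rpredB // dhomogX /= mdeg1.
Qed.

Lemma dvdmp_prod_subX (s : seq ('I_n * 'I_n)) f :
  uniq s -> all lt_pair s ->
  (forall P, P \in s -> dvdmp ('X_P.1 - 'X_P.2) f) ->
  dvdmp (\prod_(P <- s) ('X_P.1 - 'X_P.2)) f.
Proof.
elim: s => [|P s IH] /=; first by exists f; rewrite big_nil mulr1.
case/andP=> P_notin_s uniq_s /andP [ord_P ord_s] dvd_s.
have [r def_f] : dvdmp (\prod_(Q <- s) ('X_Q.1 - 'X_Q.2)) f.
  by apply: IH => // Q sQ; apply: dvd_s; rewrite inE sQ orbT.
have [r' def_r] : dvdmp ('X_P.1 - 'X_P.2) r.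
  apply: (dvdmp_subX_cancel (g := \prod_(Q <- s) ('X_Q.1 - 'X_Q.2))).
    rewrite rmorph_prod prodf_seq_neq0; apply/allP => Q sQ /=.
    apply: comp_substX_subX_neq0 => //; first exact: (allP ord_s).
    by apply: contraNneq P_notin_s => <-.
  by rewrite -def_f; apply: dvd_s; rewrite mem_head.
by exists r'; rewrite def_f def_r big_cons mulrA.
Qed.

Lemma msize_dhomog f d : f != 0 -> f \is d.-homog -> msize f = d.+1.
Proof. by move=> nz_f /dhomog_mf hom_f; rewrite -mlead_deg // hom_f // mlead_supp. Qed.

Lemma size_le_dhomog_dvdmp (s : seq ('I_n * 'I_n)) f d :
  uniq s -> all lt_pair s -> f != 0 -> f \is d.-homog ->
  (forall P, P \in s -> dvdmp ('X_P.1 - 'X_P.2) f) -> (size s <= d)%N.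
Proof.
move=> uniq_s ord_s nz_f hom_f /(dvdmp_prod_subX uniq_s ord_s) [r def_f].
have nz_r : r != 0 by apply: contraNneq nz_f => r0; rewrite def_f r0 mul0r.
have := msize_dhomog nz_f hom_f; rewrite def_f msizeM ?prod_subX_neq0 //.
rewrite (msize_dhomog (prod_subX_neq0 ord_s) (prod_subX_dhomog s)).
have : (0 < msize r)%N by rewrite lt0n msize_poly_eq0.
lia.
Qed.

End SubXDivisibility.

Section Inversions.
Variable n : nat.
Implicit Types (u x : {perm 'I_n}) (j k : 'I_n).

Lemma srefV j k u (x : 'I_n) : (sref j k u)^-1%g x = u^-1%g (tperm j k x).
Proof. by rewrite /sref invMg permM tpermV. Qed.

Lemma srefK j k : involutive (sref j k).
Proof. by move=> u; apply/permP => x; rewrite /sref !permM tpermK. Qed.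

Lemma inv_pair_sref j k u : j < k -> inv_pair (sref j k u) (j, k) = ~~ inv_pair u (j, k).
Proof.
move=> lt_jk; rewrite /inv_pair /= lt_jk !srefV tpermL tpermR /=.
have ne_jk : (u^-1%g j : nat) != u^-1%g k.
  by apply/eqP => /ord_inj/perm_inj eq_jk; rewrite eq_jk ltnn in lt_jk.
by rewrite ltn_neqAle ne_jk leqNgt.
Qed.

Lemma length_enum u : length u = size (enum [pred P | inv_pair u P]).
Proof. exact: cardE. Qed.

(* For an inversion (j,k) of u, this injects the inversions of [sref j k u]
   into those of u other than (j,k): [tperm j k] reverses the order of such a
   pair only for (j,b) and (a,k) with a, b strictly between j and k, and these
   are inversions of u themselves. *)
Definition tperm_pair j k (P : 'I_n * 'I_n) : 'I_n * 'I_n :=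
  if tperm j k P.1 < tperm j k P.2 then (tperm j k P.1, tperm j k P.2) else P.

Lemma tperm_pair_inj j k :
  {in [pred P : 'I_n * 'I_n | P.1 < P.2] &, injective (tperm_pair j k)}.
Proof.
move=> [a b] [c d]; rewrite !inE /tperm_pair /= => ab cd.
case: ifP => tab; case: ifP => tcd //.
- by case=> /perm_inj -> /perm_inj ->.
- by case=> ea eb; rewrite -ea -eb !tpermK ab in tcd.
- by case=> ea eb; rewrite ea eb !tpermK cd in tab.
Qed.

Lemma inv_pair_tperm_pair j k u P : inv_pair u (j, k) -> inv_pair (sref j k u) P ->
  inv_pair u (tperm_pair j k P) && (tperm_pair j k P != (j, k)).
Proof.
case/andP=> /= lt_jk lt_u_kj; case: P => a b /andP [/= ab]; rewrite !srefV.
rewrite /tperm_pair /inv_pair /=; case: ifP => [-> -> /=|]; rewrite xpair_eqE.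
  apply/negP => /andP [/eqP ea /eqP eb]; move: ab.
  rewrite -(tpermK j k a) -(tpermK j k b) ea eb tpermL tpermR.
  by move=> /(ltn_trans lt_jk); rewrite ltnn.
move: ab => /=; case: tpermP => [->|->|/eqP/negbTE-> _];
  case: tpermP => [->|->|_ /eqP/negbTE->]; rewrite ?eqxx /=; lia.
Qed.

Lemma length_sref_lt j k u : inv_pair u (j, k) -> length (sref j k u) < length u.
Proof.
have lengthE x : length x = #|[set P | inv_pair x P]| by rewrite cardsE.
move=> inv_jk; rewrite !lengthE -(card_in_imset (f := tperm_pair j k)); last first.
  by move=> P Q; rewrite !inE => /andP [PP _] /andP [QQ _]; apply: tperm_pair_inj.
rewrite [X in _ < X](cardsD1 (j, k)) inE inv_jk add1n ltnS.
apply/subset_leq_card/subsetP => Q /imsetP [P]; rewrite inE.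
move=> /(inv_pair_tperm_pair inv_jk) /andP [inv_P ne_P] ->.
by rewrite !inE ne_P inv_P.
Qed.
End Inversions.

Lemma connect_homo_ltn (T : finType) (e : rel T) (f : T -> nat) :
  {homo f : x y / e x y >-> x < y} ->
  forall x y, connect e x y -> x = y \/ f x < f y.
Proof.
move=> f_homo x y /connectP [s]; elim: s x => [|z s IH] x /=; first by left.
case/andP=> /f_homo lt_xz /IH IH_z /IH_z [<-|lt_zy]; right=> //.
exact: ltn_trans lt_zy.
Qed.

Section MomentGraph.
Variable n : nat.
Implicit Types (u v w x y z : {perm 'I_n}) (j k : 'I_n).

Lemma bruhat_le_length x y : bruhat_le x y -> x = y \/ length x < length y.
Proof. by apply: connect_homo_ltn => {}x {}y /existsP [j /existsP [k /and3P []]]. Qed.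

Lemma bruhat_lt_length x y : bruhat_lt x y -> length x < length y.
Proof. by case/andP=> ne_xy /bruhat_le_length [eq_xy|//]; rewrite eq_xy eqxx in ne_xy. Qed.

Lemma bruhat_step_sref j k u : inv_pair u (j, k) -> bruhat_step (sref j k u) u.
Proof.
move=> inv_jk; have /andP [lt_jk _] := inv_jk.
by apply/existsP; exists j; apply/existsP; exists k; rewrite lt_jk srefK eqxx length_sref_lt.
Qed.

Lemma mg_edge_of_step w y z : bruhat_step z y -> bruhat_le y w -> mg_edge w y z.
Proof.
move=> step_zy le_yw; have le_zy : bruhat_le z y := connect1 step_zy.
have le_zw : bruhat_le z w := connect_trans le_zy le_yw.
case/existsP: step_zy => j /existsP [k] /and3P [lt_jk /eqP def_y lt_len].
apply/existsP; exists j; apply/existsP; exists k.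
rewrite lt_jk def_y srefK eqxx -def_y le_yw le_zw /bruhat_lt le_zy.
by rewrite andbT; apply: contraTneq lt_len => ->; rewrite ltnn.
Qed.

Lemma mg_edge_bruhat_lt w x y : mg_edge w x y -> bruhat_lt y x.
Proof. by case/existsP=> j /existsP [k /and5P []]. Qed.

Lemma mg_connect_bruhat_le w x y : connect (mg_edge w) x y -> bruhat_le y x.
Proof.
have revE a b : connect [rel c d | bruhat_step d c] a b = bruhat_le b a := connect_rev _ a b.
rewrite -revE; apply: connect_sub => a b /mg_edge_bruhat_lt /andP [_].
by rewrite revE.
Qed.

Lemma mg_pos_path_length w u v : mg_pos_path w u v -> length v < length u.
Proof.
case/existsP=> u' /andP [/mg_edge_bruhat_lt/bruhat_lt_length lt_u'u].
by case/mg_connect_bruhat_le/bruhat_le_length => [->|/ltn_trans]; last exact.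
Qed.

Lemma mg_connect_of_bruhat_le w x y : bruhat_le y x -> bruhat_le x w ->
  connect (mg_edge w) x y.
Proof.
case/connectP=> s; elim: s y => [y _ -> _|z s IH y /andP [step_yz path_zs] def_x le_xw].
  exact: connect0.
have le_zw : bruhat_le z w by apply: connect_trans le_xw; apply/connectP; exists s.
exact: connect_trans (IH z path_zs def_x le_xw) (connect1 (mg_edge_of_step step_yz le_zw)).
Qed.

Lemma mg_pos_path_of_bruhat_lt w u v : bruhat_lt v u -> bruhat_le u w -> mg_pos_path w u v.
Proof.
case/andP=> ne_vu le_vu /(mg_connect_of_bruhat_le le_vu) /connectP [[|u' s]] /=.
  by move=> _ eq_vu; rewrite eq_vu eqxx in ne_vu.
case/andP=> edge_uu' path_s last_s; apply/existsP; exists u'.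
by rewrite edge_uu'; apply/connectP; exists s.
Qed.

Lemma mg_edge_sref_inv_pair w v j k : bruhat_le v w ->
  (j < k) && mg_edge w v (sref j k v) = inv_pair v (j, k).
Proof.
move=> le_vw; apply/idP/idP => [/andP [lt_jk /mg_edge_bruhat_lt lt_sv]|inv_jk].
  apply: contraTT (bruhat_lt_length lt_sv); rewrite -inv_pair_sref // -leqNgt.
  by move/length_sref_lt; rewrite srefK => /ltnW.
have /andP [lt_jk _] := inv_jk.
by rewrite lt_jk mg_edge_of_step ?bruhat_step_sref.
Qed.

End MomentGraph.

Section KnutsonTaoClasses.
Variables (F : numClosedFieldType) (n : nat).
Implicit Types (u v w : {perm 'I_n}) (p q : {perm 'I_n} -> {mpoly F[n]}).
Local Open Scope ring_scope.

Lemma inv_prod_enum v :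
  inv_prod F v = \prod_(P <- enum [pred P | inv_pair v P]) ('X_P.1 - 'X_P.2).
Proof. by rewrite big_enum. Qed.

Lemma all_lt_pair_inv v : all (@lt_pair n) (enum [pred P | inv_pair v P]).
Proof. by apply/allP => P; rewrite mem_enum => /andP []. Qed.

Lemma inv_prod_neq0 v : inv_prod F v != 0.
Proof. by rewrite inv_prod_enum prod_subX_neq0 // all_lt_pair_inv. Qed.

Lemma inv_prod_dhomog v : inv_prod F v \is (length v).-homog.
Proof. by rewrite inv_prod_enum length_enum prod_subX_dhomog. Qed.

Lemma tdeg_inv_prod v : tdeg (inv_prod F v) = length v.
Proof. by rewrite /tdeg (msize_dhomog (inv_prod_neq0 v) (inv_prod_dhomog v)). Qed.

Lemma out_label_prod_inv_prod w v : bruhat_le v w -> out_label_prod F w v = inv_prod F v.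
Proof. by move=> le_vw; apply: eq_bigl => -[j k]; apply: mg_edge_sref_inv_pair. Qed.

Lemma KT_class_dhomog w v q : bruhat_le v w -> KT_class w v q ->
  forall u, bruhat_le u w -> q u \is (length v).-homog.
Proof.
move=> le_vw [_ q_v q_hom _] u le_uw.
have [->|nz_qu] := eqVneq (q u) 0; first exact: rpred0.
by rewrite -(tdeg_inv_prod v) -(out_label_prod_inv_prod le_vw) -q_v q_hom.
Qed.

Lemma schubert_class_KT w v p : bruhat_le v w -> schubert_class_props v p -> KT_class w v p.
Proof.
move=> le_vw [p_GKM p_supp p_hom p_v]; split.
- by move=> u j k lt_jk _ _; apply: p_GKM.
- by rewrite p_v out_label_prod_inv_prod.
- by rewrite p_v tdeg_inv_prod => u _; apply: p_hom.
- move=> u le_uw ne_uv no_path; apply: p_supp; apply: contra no_path => le_vu.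
  by apply: mg_pos_path_of_bruhat_lt le_uw; rewrite /bruhat_lt eq_sym ne_uv.
Qed.

Lemma KT_class_unique w v q1 q2 : bruhat_le v w -> KT_class w v q1 -> KT_class w v q2 ->
  forall u, bruhat_le u w -> q1 u = q2 u.
Proof.
move=> le_vw KT1 KT2 u; have [m] := ubnP (length u); elim: m u => // m IH u.
rewrite ltnS => len_u le_uw.
have [GKM1 q1_v _ van1] := KT1; have [GKM2 q2_v _ van2] := KT2.
have [->|ne_uv] := eqVneq u v; first by rewrite q1_v q2_v.
have [path_uv|no_path] := boolP (mg_pos_path w u v); last by rewrite van1 ?van2.
apply/eqP; rewrite -subr_eq0; apply/contraT => nz_d.
suff : (length u <= length v)%N by rewrite leqNgt (mg_pos_path_length path_uv).
rewrite [length u]length_enum.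
apply: (size_le_dhomog_dvdmp (enum_uniq _) (all_lt_pair_inv u) nz_d).
  by rewrite rpredB ?(KT_class_dhomog le_vw).
move=> [j k]; rewrite mem_enum => inv_jk; have /andP [lt_jk _] := inv_jk.
have le_u'w : bruhat_le (sref j k u) w.
  exact: connect_trans (connect1 (bruhat_step_sref inv_jk)) le_uw.
have eq_u' : q1 (sref j k u) = q2 (sref j k u).
  by apply: IH le_u'w; apply: leq_trans (length_sref_lt inv_jk) len_u.
have [r1 e1] := GKM1 u j k lt_jk le_uw le_u'w.
have [r2 e2] := GKM2 u j k lt_jk le_uw le_u'w.
by exists (r1 - r2); rewrite mulrBl -e1 -e2 eq_u' opprB addrA subrK.
Qed.

End KnutsonTaoClasses.

Theorem mainTheorem5 (F : numClosedFieldType) (n : nat) (v w : {perm 'I_n})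
    (p : {perm 'I_n} -> {mpoly F[n]}) :
  bruhat_le v w ->
  schubert_class_props v p ->
  KT_class w v p /\
  (forall q : {perm 'I_n} -> {mpoly F[n]}, KT_class w v q ->
     forall u : {perm 'I_n}, bruhat_le u w -> q u = p u).
Proof.
move=> le_vw schubert_p; have KT_p := schubert_class_KT le_vw schubert_p.
by split=> // q KT_q; apply: KT_class_unique le_vw KT_q KT_p.
Qed.
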